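(* Let $C$ be a Pauli-Square-Root Clifford on $t$ qubits and let $P$ be a $(t+1)$-qubit Pauli acting on one control qubit together with these $t$ qubits. Then there exist a $(t+1)$-qubit Pauli $P'$, a $t$-qubit Pauli $Q$, and $b\in\{0,1\}$ such that $$C(C)\,P=(I\otimes C^{b})\,C(Q)\,P'\,C(C),$$ where $Q$ either commutes or anticommutes with $C$, and $\mathrm{Supp}(Q)\subseteq\mathrm{Supp}(C)$.
   Context: Paulis are tensor products of $I,X,Y,Z$ times a phase in $\{\pm1,\pm i\}$; a Clifford is a unitary mapping Paulis to Paulis under conjugation. A Pauli-Square-Root Clifford (PSC) is a Clifford that is not a Pauli and whose square is a Pauli. For a unitary $U$ on $t$ qubits, $C(U)=|0\rangle\langle0|\otimes I+|1\rangle\langle1|\otimes U$ on $1+t$ qubits (control first). $\mathrm{Supp}(W)$ denotes the set of qubits on which an operator $W$ acts nontrivially. *)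

From HB Require Import structures.
From mathcomp Require Import all_boot all_order all_algebra all_field.
Set Implicit Arguments. Unset Strict Implicit. Unset Printing Implicit Defensive.
Import Order.TTheory GRing.Theory Num.Theory.
Local Open Scope ring_scope.

(* Basis index i < 2^t encodes the bit string of t qubits; qubit j (0-based)
   is the bit of weight 2^(t-1-j), i.e. qubit 0 is the most significant
   (standard Kronecker ordering, leftmost tensor factor = qubit 0). *)
Definition qbit (t : nat) (i j : nat) : bool := odd (i %/ 2 ^ (t.-1 - j)).

(* Entries of the single-qubit Paulis: 0 = I, 1 = X, 2 = Y, 3 = Z;
   basis state false = |0>, true = |1>; sig s a b = <a| sigma_s |b>. *)
Definition sig (s : 'I_4) (a b : bool) : algC :=
  match val s with
  | 0 => if a == b then 1 else 0
  | 1 => if a == b then 0 else 1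
  | 2 => if a == b then 0 else if a then 'i else - 'i
  | _ => if a == b then (if a then -1 else 1) else 0
  end.

(* The tensor product sigma_{p 0} (x) ... (x) sigma_{p (t-1)}. *)
Definition pstr (t : nat) (p : 'I_t -> 'I_4) : 'M[algC]_(2 ^ t) :=
  \matrix_(i, k) \prod_(j < t) sig (p j) (qbit t i j) (qbit t k j).

Definition is_pauli (t : nat) (A : 'M[algC]_(2 ^ t)) : Prop :=
  exists (c : algC) (p : 'I_t -> 'I_4),
    c \in [:: 1; -1; 'i; - 'i] /\ A = c *: pstr p.

Definition adjmx n (A : 'M[algC]_n) : 'M[algC]_n := (map_mx Num.conj A)^T.

Definition unitary n (A : 'M[algC]_n) : Prop :=
  A *m adjmx A = 1%:M /\ adjmx A *m A = 1%:M.

Definition clifford (t : nat) (U : 'M[algC]_(2 ^ t)) : Prop :=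
  unitary U /\ forall P, is_pauli P -> is_pauli (U *m P *m adjmx U).

Definition PSC (t : nat) (C : 'M[algC]_(2 ^ t)) : Prop :=
  clifford C /\ ~ is_pauli C /\ is_pauli (C *m C).

Lemma exp2_gt0 (t : nat) : (0 < 2 ^ t)%N.
Proof. by rewrite expn_gt0. Qed.

Definition hi (t : nat) (i : 'I_(2 ^ t.+1)) : 'I_2 := insubd ord0 (i %/ 2 ^ t)%N.
Definition lo (t : nat) (i : 'I_(2 ^ t.+1)) : 'I_(2 ^ t) :=
  Ordinal (ltn_pmod i (exp2_gt0 t)).

(* Kronecker product A (x) B, A on the first qubit, B on the other t. *)
Definition tens2 (t : nat) (A : 'M[algC]_2) (B : 'M[algC]_(2 ^ t))
  : 'M[algC]_(2 ^ t.+1) :=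
  \matrix_(i, k) (A (hi i) (hi k) * B (lo i) (lo k)).

Definition ketbra (a : 'I_2) : 'M[algC]_2 := \matrix_(i, k) ((i == a) && (k == a))%:R.
Definition ctrl (t : nat) (U : 'M[algC]_(2 ^ t)) : 'M[algC]_(2 ^ t.+1) :=
  tens2 (ketbra ord0) 1%:M + tens2 (ketbra ord_max) U.

Definition clr (t : nat) (i : 'I_(2 ^ t)) (j : nat) : 'I_(2 ^ t) :=
  insubd i (i - qbit t i j * 2 ^ (t.-1 - j))%N.

(* W acts trivially on qubit j: W = I_j (x) W' for some W' on the other
   qubits (written out entrywise: W' is read off from the entries with
   bit j cleared). *)
Definition acts_trivially (t : nat) (W : 'M[algC]_(2 ^ t)) (j : 'I_t) : Prop :=
  forall i k : 'I_(2 ^ t),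
    W i k = if qbit t i j == qbit t k j then W (clr i j) (clr k j) else 0.

Definition in_supp (t : nat) (W : 'M[algC]_(2 ^ t)) (j : 'I_t) : Prop :=
  ~ acts_trivially W j.

(* Write P = c (sigma (x) R) with R a Pauli string on the target qubits.  If sigma is I or Z it
   commutes with the projectors |0><0| and |1><1|, and C(C) P = C(Q) P C(C) for Q = (C R C^-1) R.
   If sigma is X or Y it swaps them, and C(C) P = (I (x) C) C(Q) P' C(C) for Q = R C R C and
   P' = c (sigma (x) C^-1 R C^-1).  All of these are Paulis because C is Clifford and C^2 is a
   Pauli: C^2 commutes with R up to sign, hence C^-1 R C = +-C R C^-1, and C^-1 C^-1 = +-C^2.
   The same sign bookkeeping shows that Q commutes or anticommutes with C.  Finally, R occurs twice
   in Q, so Q commutes with every Pauli W commuting with C; when C acts trivially on qubit j this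
   applies to X_j and Z_j, and commuting with both forces Q to act trivially on qubit j. *)

From mathcomp Require Import all_boot all_order all_algebra all_field zify.
From mathcomp Require Import mxtens.
Import GRing.Theory Num.Theory.
Set Implicit Arguments. Unset Strict Implicit. Unset Printing Implicit Defensive.

(** * Bits of natural numbers *)

Section Bits.
Implicit Types (e f x y : nat) (c : bool).

Definition setbit e x c : nat := ((x %/ 2 ^ e.+1).*2 + c) * 2 ^ e + x %% 2 ^ e.

Lemma setbit_mod e x c : setbit e x c %% 2 ^ e = x %% 2 ^ e.
Proof. by rewrite modnMDl modn_mod. Qed.

Lemma setbit_div e x c : setbit e x c %/ 2 ^ e = (x %/ 2 ^ e.+1).*2 + c.
Proof. by rewrite divnMDl ?expn_gt0 // [_ %/ 2 ^ e]divn_small ?addn0 // ltn_mod expn_gt0. Qed.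

Lemma divn_exp2S e x : x %/ 2 ^ e.+1 = (x %/ 2 ^ e)./2.
Proof. by rewrite expnSr divnMA divn2. Qed.

Lemma setbit_divS e x c : setbit e x c %/ 2 ^ e.+1 = x %/ 2 ^ e.+1.
Proof. by rewrite divn_exp2S setbit_div addnC half_bit_double. Qed.

Lemma setbit_id e x : setbit e x (odd (x %/ 2 ^ e)) = x.
Proof. by rewrite /setbit divn_exp2S (addnC _.*2) odd_double_half -divn_eq. Qed.

Lemma setbit_false e x : setbit e x false = x - odd (x %/ 2 ^ e) * 2 ^ e.
Proof. by rewrite -{2}(setbit_id e x) /setbit !mulnDl addn0 addnAC addnK. Qed.

Lemma divn_exp2_ge e f x : e < f -> x %/ 2 ^ f = x %/ 2 ^ e.+1 %/ 2 ^ (f - e.+1).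
Proof. by move=> ef; rewrite -divnMA -expnD subnKC. Qed.

Lemma odd_divn_exp2_mod e f x : f < e -> odd (x %/ 2 ^ f) = odd (x %% 2 ^ e %/ 2 ^ f).
Proof.
move=> fe; have -> : 2 ^ e = 2 ^ (e - f) * 2 ^ f by rewrite -expnD subnK // ltnW.
rewrite {1}(divn_eq x (2 ^ (e - f) * 2 ^ f)) mulnA divnMDl ?expn_gt0 //.
by rewrite oddD oddM oddX subn_eq0 leqNgt fe andbF.
Qed.

Lemma odd_setbit e f x c :
  odd (setbit e x c %/ 2 ^ f) = if f == e then c else odd (x %/ 2 ^ f).
Proof.
case: (ltngtP f e) => [fe|ef|->].
- by rewrite (odd_divn_exp2_mod x fe) (odd_divn_exp2_mod (setbit e x c) fe) setbit_mod.
- by rewrite (divn_exp2_ge x ef) (divn_exp2_ge (setbit e x c) ef) setbit_divS.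
- by rewrite setbit_div oddD odd_double oddb.
Qed.

Lemma setbit_lt e t x c : e < t -> x < 2 ^ t -> setbit e x c < 2 ^ t.
Proof.
move=> et; rewrite -[2 ^ t]mul1n -!ltn_divLR ?expn_gt0 //.
by rewrite (divn_exp2_ge x et) (divn_exp2_ge (setbit e x c) et) setbit_divS.
Qed.

Lemma bits_inj n x y : x < 2 ^ n -> y < 2 ^ n ->
  (forall f, f < n -> odd (x %/ 2 ^ f) = odd (y %/ 2 ^ f)) -> x = y.
Proof.
elim: n x y => [|n IH] x y; first by rewrite !ltnS !leqn0 => /eqP-> /eqP->.
move=> xn yn bits_xy; rewrite -[x]odd_double_half -[y]odd_double_half.
have := bits_xy 0 isT; rewrite !divn1 => ->; congr (_ + _.*2).
apply: IH; rewrite -?divn2 ?ltn_divLR -?expnSr // => f fn.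
by rewrite -!divnMA -expnS bits_xy.
Qed.

End Bits.

(** * Qubit indices *)

Section QubitIndex.
Variable t : nat.
Implicit Types (i k : 'I_(2 ^ t)) (j : 'I_t).

Lemma qexp_lt j : t.-1 - j < t.
Proof. by have := ltn_ord j; lia. Qed.

Lemma qexp_eq j j' : (t.-1 - j == t.-1 - j') = (j == j').
Proof.
apply/eqP/eqP => [|->//] eq_e; apply: val_inj => /=.
by have := ltn_ord j; have := ltn_ord j'; lia.
Qed.

Lemma qbit_inj i k : (forall j, qbit t i j = qbit t k j) -> i = k.
Proof.
move=> eq_ik; apply/val_inj/(bits_inj (ltn_ord i) (ltn_ord k)) => f ft.
have ft' : t.-1 - f < t by lia.
by have := eq_ik (Ordinal ft'); rewrite /qbit /= (_ : t.-1 - (t.-1 - f) = f) //; lia.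
Qed.

Definition setq i j c : 'I_(2 ^ t) := Ordinal (setbit_lt c (qexp_lt j) (ltn_ord i)).

Lemma qbit_setq i j c j' : qbit t (setq i j c) j' = if j' == j then c else qbit t i j'.
Proof. by rewrite /qbit odd_setbit qexp_eq. Qed.

Lemma setq_qbit i j : setq i j (qbit t i j) = i.
Proof. by apply: val_inj; rewrite /= setbit_id. Qed.

Lemma setq_setq i j c d : setq (setq i j c) j d = setq i j d.
Proof. by apply: qbit_inj => j'; rewrite !qbit_setq; case: eqP. Qed.

Lemma clr_setq i j : clr i j = setq i j false.
Proof.
apply: val_inj; rewrite /clr insubdK /= ?setbit_false // unfold_in /=.
exact: leq_ltn_trans (leq_subr _ _) (ltn_ord i).
Qed.

Definition flipq i j := setq i j (~~ qbit t i j).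

Lemma qbit_flipq i j j' : qbit t (flipq i j) j' = if j' == j then ~~ qbit t i j else qbit t i j'.
Proof. exact: qbit_setq. Qed.

Lemma flipqK j : involutive (flipq ^~ j).
Proof. by move=> i; rewrite /flipq setq_setq qbit_setq eqxx negbK setq_qbit. Qed.

Lemma clr_flipq i j : clr (flipq i j) j = clr i j.
Proof. by rewrite !clr_setq setq_setq. Qed.

Lemma clr_qbitF i j : qbit t i j = false -> clr i j = i.
Proof. by move=> iF; rewrite clr_setq -iF setq_qbit. Qed.

Lemma clr_qbitT i j : qbit t i j -> clr i j = flipq i j.
Proof. by move=> iT; rewrite clr_setq /flipq iT. Qed.

End QubitIndex.

Local Open Scope ring_scope.

(** * Tensor products with the control qubit *)

Section ControlQubit.
Variable t : nat.
Implicit Types (A : 'M[algC]_2) (B : 'M[algC]_(2 ^ t)).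

Lemma hiE (i : 'I_(2 ^ t.+1)) : val (hi i) = (i %/ 2 ^ t)%N.
Proof. by rewrite /hi insubdK // unfold_in /= ltn_divLR ?expn_gt0 // -expnS. Qed.

Lemma tens2_tensmx A B :
  tens2 A B = castmx (esym (expnS 2 t), esym (expnS 2 t)) (A *t B).
Proof.
apply/matrixP => i k; rewrite castmxE !mxE /=.
by congr (A _ _ * B _ _); apply: val_inj; rewrite /= ?hiE.
Qed.

Lemma castmx_mulmx n n' (e : n = n') (M N : 'M[algC]_n) :
  castmx (e, e) M *m castmx (e, e) N = castmx (e, e) (M *m N).
Proof. by case: n' / e. Qed.

Lemma tens2_mul A A' B B' : tens2 A B *m tens2 A' B' = tens2 (A *m A') (B *m B').
Proof. by rewrite !tens2_tensmx castmx_mulmx tensmx_mul. Qed.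

Lemma tens2_1 : tens2 1%:M (1%:M : 'M_(2 ^ t)) = 1%:M.
Proof.
apply/matrixP => i k; rewrite !mxE -natrM mulnb; congr (nat_of_bool _)%:R.
apply/andP/eqP => [[/eqP hik /eqP lik]|->]; last by rewrite !eqxx.
apply: val_inj; rewrite /= (divn_eq i (2 ^ t)) (divn_eq k (2 ^ t)) -!hiE.
by rewrite hik; congr (_ + _); apply: (congr1 val lik).
Qed.

Lemma tens2_0l B : tens2 0 B = 0.
Proof. by apply/matrixP => i k; rewrite !mxE mul0r. Qed.

Lemma tens2Dl A A' B : tens2 (A + A') B = tens2 A B + tens2 A' B.
Proof. by apply/matrixP => i k; rewrite !mxE mulrDl. Qed.

Lemma tens2Zl c A B : tens2 (c *: A) B = c *: tens2 A B.
Proof. by apply/matrixP => i k; rewrite !mxE mulrA. Qed.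

Lemma tens2Zr c A B : tens2 A (c *: B) = c *: tens2 A B.
Proof. by apply/matrixP => i k; rewrite !mxE mulrCA. Qed.

End ControlQubit.

(** * Pauli operators *)

Definition sI : 'I_4 := @Ordinal 4 0 isT.
Definition sX : 'I_4 := @Ordinal 4 1 isT.
Definition sY : 'I_4 := @Ordinal 4 2 isT.
Definition sZ : 'I_4 := @Ordinal 4 3 isT.

Lemma prod_natb n (F : 'I_n -> bool) :
  \prod_(j < n) ((F j)%:R : algC) = [forall j, F j]%:R.
Proof.
have [/forallP allF | /forallPn [j0 nFj0]] := boolP [forall j, F j].
  by rewrite big1 // => j _; rewrite allF.
by rewrite (bigD1 j0) //= (negbTE nFj0) mul0r.
Qed.

Section SingleQubitPaulis.
Variables (t : nat) (j : 'I_t).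
Implicit Types (i k : 'I_(2 ^ t)) (W : 'M[algC]_(2 ^ t)).

Definition pauli_at (s : 'I_4) : 'M[algC]_(2 ^ t) := pstr (fun j' => if j' == j then s else sI).

Local Notation X := (pauli_at sX).
Local Notation Z := (pauli_at sZ).

Lemma pauli_atXE i k : X i k = (k == flipq i j)%:R.
Proof.
rewrite mxE (eq_bigr (fun j' : 'I_t => (qbit t k j' == qbit t (flipq i j) j')%:R)) => [|j' _].
  rewrite prod_natb; congr (nat_of_bool _)%:R; apply/forallP/eqP => [|-> //].
  by move=> eq_kf; apply: qbit_inj => j'; apply/eqP.
rewrite qbit_flipq; case: eqP => [->|_];
by case: (qbit t i _); case: (qbit t k _).
Qed.

Lemma pauli_atZE i k : Z i k = (i == k)%:R * (-1) ^+ qbit t i j.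
Proof.
rewrite mxE (eq_bigr (fun j' : 'I_t => (qbit t i j' == qbit t k j')%:R *
    (if j' == j then (-1) ^+ qbit t i j else 1))) => [|j' _].
  rewrite big_split /= prod_natb (bigD1 j) //= eqxx big1 ?mulr1 => [|j' /negbTE-> //].
  congr ((nat_of_bool _)%:R * _); apply/forallP/eqP => [|-> //].
  by move=> eq_ik; apply: qbit_inj => j'; apply/eqP.
by case: eqP => [->|_]; case: (qbit t i _); case: (qbit t k _);
  rewrite /sig /= ?mul1r ?mulr1 ?mul0r.
Qed.

Lemma mulmx_pauli_atX W i k : (W *m X) i k = W i (flipq k j).
Proof.
rewrite mxE (bigD1 (flipq k j)) //= pauli_atXE flipqK eqxx mulr1 big1 ?addr0 // => m.
rewrite pauli_atXE; have [->|_] := eqVneq k (flipq m j); last by rewrite mulr0.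
by rewrite flipqK eqxx.
Qed.

Lemma pauli_atX_mulmx W i k : (X *m W) i k = W (flipq i j) k.
Proof.
rewrite mxE (bigD1 (flipq i j)) //= pauli_atXE eqxx mul1r big1 ?addr0 // => m.
by rewrite pauli_atXE => /negbTE->; rewrite mul0r.
Qed.

Lemma mulmx_pauli_atZ W i k : (W *m Z) i k = W i k * (-1) ^+ qbit t k j.
Proof.
rewrite mxE (bigD1 k) //= pauli_atZE eqxx mul1r big1 ?addr0 // => m.
by rewrite pauli_atZE => /negbTE->; rewrite mul0r mulr0.
Qed.

Lemma pauli_atZ_mulmx W i k : (Z *m W) i k = (-1) ^+ qbit t i j * W i k.
Proof.
rewrite mxE (bigD1 i) //= pauli_atZE eqxx mul1r big1 ?addr0 // => m.
by rewrite pauli_atZE eq_sym => /negbTE->; rewrite !mul0r.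
Qed.

(* Commuting with Z_j kills the entries that flip qubit j; commuting with X_j identifies
   the two remaining blocks. *)
Lemma acts_triviallyP W : acts_trivially W j <-> W *m X = X *m W /\ W *m Z = Z *m W.
Proof.
split=> [W_triv | [WX WZ] i k].
  split; apply/matrixP => i k.
    rewrite mulmx_pauli_atX pauli_atX_mulmx W_triv [RHS]W_triv !clr_flipq !qbit_flipq eqxx.
    by case: (qbit t i j); case: (qbit t k j).
  rewrite mulmx_pauli_atZ pauli_atZ_mulmx mulrC W_triv.
  by case: (qbit t i j); case: (qbit t k j); rewrite /= ?mulr0.
have := congr1 (fun M : 'M[algC]_(2 ^ t) => M i k) WZ.
rewrite /= mulmx_pauli_atZ pauli_atZ_mulmx.
case iT: (qbit t i j); case kT: (qbit t k j) => /=.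
- move=> _; rewrite (clr_qbitT iT) (clr_qbitT kT).
  have := congr1 (fun M : 'M[algC]_(2 ^ t) => M i (flipq k j)) WX.
  by rewrite /= mulmx_pauli_atX pauli_atX_mulmx flipqK.
- by rewrite expr0 expr1 mulr1 mulN1r => /eqP; rewrite -addr_eq0 -mulr2n mulrn_eq0 => /eqP.
- by rewrite expr0 expr1 mulrN1 mul1r => /eqP; rewrite eq_sym -addr_eq0 -mulr2n mulrn_eq0 => /eqP.
- by move=> _; rewrite (clr_qbitF iT) (clr_qbitF kT).
Qed.

End SingleQubitPaulis.

Lemma mulmx2E (A B : 'M[algC]_2) x y :
  (A *m B) x y = A x ord0 * B ord0 y + A x ord_max * B ord_max y.
Proof.
rewrite mxE big_ord_recl big_ord1.
by have -> : lift ord0 ord0 = ord_max :> 'I_2 by apply: val_inj.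
Qed.

Definition sigm (s : 'I_4) : 'M[algC]_2 := \matrix_(a, b) sig s (odd a) (odd b).

Lemma qbit_hi t (i : 'I_(2 ^ t.+1)) : qbit t.+1 i (@ord0 t) = odd (hi i).
Proof. by rewrite /qbit hiE subn0. Qed.

Lemma qbit_lift t (i : 'I_(2 ^ t.+1)) (j : 'I_t) : qbit t.+1 i (lift ord0 j) = qbit t (lo i) j.
Proof.
rewrite /qbit /= (_ : t - j.+1 = t.-1 - j)%N; last by have := ltn_ord j; lia.
by rewrite (odd_divn_exp2_mod i (qexp_lt j)).
Qed.

Lemma pstr_nil (p : 'I_0 -> 'I_4) : pstr p = 1%:M.
Proof. by apply/matrixP => -[[|//] ?] [[|//] ?]; rewrite !mxE big_ord0. Qed.

Lemma pstr_head t (p : 'I_t.+1 -> 'I_4) :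
  pstr p = tens2 (sigm (p ord0)) (pstr (fun j => p (lift ord0 j))).
Proof.
apply/matrixP => i k; rewrite !mxE big_ord_recl !qbit_hi.
by congr (_ * _); apply: eq_bigr => j _; rewrite !qbit_lift.
Qed.

Definition pcons t (s : 'I_4) (p : 'I_t -> 'I_4) (j : 'I_t.+1) : 'I_4 :=
  if unlift ord0 j is Some j' then p j' else s.

Lemma pstr_cons t s (p : 'I_t -> 'I_4) : pstr (pcons s p) = tens2 (sigm s) (pstr p).
Proof.
rewrite pstr_head /pcons unlift_none; congr tens2.
by apply/matrixP => i k; rewrite !mxE; apply: eq_bigr => j _; rewrite liftK.
Qed.

Lemma phase_root4 (c : algC) : (c \in [:: 1; -1; 'i; - 'i]) = (c ^+ 4 == 1).
Proof.
rewrite -subr_eq0; have -> : c ^+ 4 - 1 = (c - 1) * (c + 1) * ((c - 'i) * (c + 'i)).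
  by rewrite -!subr_sqr sqrCi expr1n opprK -subr_sqr -exprM expr1n.
by rewrite !mulf_eq0 !subr_eq0 !addr_eq0 !inE !orbA.
Qed.

(* In the encoding 0 = I, 1 = X, 2 = Y, 3 = Z, the product of two Paulis is, up to phase,
   the Pauli whose index is the bitwise xor of theirs. *)
Definition sig_mul_idx (a b : 'I_4) : 'I_4 :=
  match val a, val b with
  | 0, _ => b
  | _, 0 => a
  | 1, 1 | 2, 2 | 3, 3 => sI
  | 1, 2 | 2, 1 => sZ
  | 1, 3 | 3, 1 => sY
  | _, _ => sX
  end.

Definition sig_mul_phase (a b : 'I_4) : algC :=
  match val a, val b with
  | 1, 2 | 2, 3 | 3, 1 => 'i
  | 2, 1 | 3, 2 | 1, 3 => - 'i
  | _, _ => 1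
  end.

Definition sig_comm_sign (a b : 'I_4) : algC :=
  if [|| val a == 0, val b == 0 | a == b] then 1 else -1.

Lemma sig_mul a b u v :
  sig a u false * sig b false v + sig a u true * sig b true v =
  sig_mul_phase a b * sig (sig_mul_idx a b) u v.
Proof.
by move: a b u v => [[|[|[|[|//]]]] ?] [[|[|[|[|//]]]] ?] [] [];
  rewrite /sig /sig_mul_idx /sig_mul_phase /= ?(mul1r, mulr1, mul0r, mulr0, addr0, add0r,
    mulrN, mulNr, opprK, mulCii).
Qed.

Lemma sig_comm a b u v :
  sig b u false * sig a false v + sig b u true * sig a true v =
  sig_comm_sign a b * (sig a u false * sig b false v + sig a u true * sig b true v).
Proof.
by move: a b u v => [[|[|[|[|//]]]] ?] [[|[|[|[|//]]]] ?] [] [];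
  rewrite /sig /sig_comm_sign /= ?(mul1r, mulr1, mul0r, mulr0, addr0, add0r,
    mulrN, mulNr, opprK, mulCii, mulN1r, oppr0).
Qed.

Lemma sig_sq a u v : sig a u false * sig a false v + sig a u true * sig a true v = (u == v)%:R.
Proof.
by move: a u v => [[|[|[|[|//]]]] ?] [] [];
  rewrite /sig /= ?(mul1r, mulr1, mul0r, mulr0, addr0, add0r, mulrN, mulNr, opprK, mulCii).
Qed.

Lemma sigm_mulmxE a b x y : (sigm a *m sigm b) x y =
  sig a (odd x) false * sig b false (odd y) + sig a (odd x) true * sig b true (odd y).
Proof. by rewrite mulmx2E !mxE. Qed.

Lemma sigm_mul a b : sigm a *m sigm b = sig_mul_phase a b *: sigm (sig_mul_idx a b).
Proof. by apply/matrixP => x y; rewrite sigm_mulmxE sig_mul !mxE. Qed.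

Lemma sigm_comm a b : sigm b *m sigm a = sig_comm_sign a b *: (sigm a *m sigm b).
Proof. by apply/matrixP => x y; rewrite sigm_mulmxE sig_comm [RHS]mxE sigm_mulmxE. Qed.

Lemma sigm_sq a : sigm a *m sigm a = 1%:M.
Proof.
apply/matrixP => x y; rewrite sigm_mulmxE sig_sq !mxE.
by case: x y => [[|[|//]] ?] [[|[|//]] ?].
Qed.

Lemma sig_mul_phase4 a b : sig_mul_phase a b ^+ 4 = 1.
Proof.
apply/eqP; rewrite -phase_root4.
by move: a b => [[|[|[|[|//]]]] ?] [[|[|[|[|//]]]] ?]; rewrite /sig_mul_phase /= !inE eqxx ?orbT.
Qed.

Lemma sig_comm_sign2 a b : sig_comm_sign a b ^+ 2 = 1.
Proof. by rewrite /sig_comm_sign; case: ifP; rewrite ?sqrrN expr1n. Qed.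

Lemma pstr_mul t (p q : 'I_t -> 'I_4) :
  exists r ph, ph ^+ 4 = 1 /\ pstr p *m pstr q = ph *: pstr r.
Proof.
elim: t p q => [|t IH] p q.
  by exists p, 1; rewrite !pstr_nil mulmx1 scale1r expr1n.
have [r [ph [ph4 pq]]] := IH (fun j => p (lift ord0 j)) (fun j => q (lift ord0 j)).
exists (pcons (sig_mul_idx (p ord0) (q ord0)) r), (sig_mul_phase (p ord0) (q ord0) * ph).
rewrite exprMn ph4 mulr1 sig_mul_phase4 (pstr_head p) (pstr_head q) tens2_mul sigm_mul pq.
by rewrite pstr_cons tens2Zl tens2Zr scalerA.
Qed.

Lemma pstr_comm t (p q : 'I_t -> 'I_4) :
  exists2 e, e ^+ 2 = 1 & pstr q *m pstr p = e *: (pstr p *m pstr q).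
Proof.
elim: t p q => [|t IH] p q; first by exists 1; rewrite ?expr1n // !pstr_nil scale1r.
have [e e2 qp] := IH (fun j => p (lift ord0 j)) (fun j => q (lift ord0 j)).
exists (sig_comm_sign (p ord0) (q ord0) * e); first by rewrite exprMn e2 sig_comm_sign2 mulr1.
by rewrite (pstr_head p) (pstr_head q) !tens2_mul sigm_comm qp tens2Zl tens2Zr scalerA.
Qed.

Lemma pstr_sq t (p : 'I_t -> 'I_4) : pstr p *m pstr p = 1%:M.
Proof.
elim: t p => [|t IH] p; first by rewrite pstr_nil mulmx1.
by rewrite pstr_head tens2_mul IH sigm_sq tens2_1.
Qed.

Definition scomm n (e : algC) (A B : 'M[algC]_n) := A *m B = e *: (B *m A).

Lemma scommM n a b (A B W : 'M[algC]_n) :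
  scomm a A W -> scomm b B W -> scomm (a * b) (A *m B) W.
Proof.
rewrite /scomm => AW BW.
by rewrite -mulmxA BW -scalemxAr (mulmxA A W) AW -scalemxAl scalerA [b * a]mulrC !mulmxA.
Qed.

Section PauliGroup.
Variable t : nat.
Implicit Types (A B : 'M[algC]_(2 ^ t)) (p : 'I_t -> 'I_4).

Lemma is_pauliP A : is_pauli A <-> exists c p, c ^+ 4 = 1 /\ A = c *: pstr p.
Proof. by split=> -[c [p [c4 ->]]]; exists c, p; rewrite phase_root4 in c4 *; move/eqP: c4. Qed.

Lemma pauli_pstr p : is_pauli (pstr p).
Proof. by apply/is_pauliP; exists 1, p; rewrite expr1n scale1r. Qed.

Lemma pauli_scale c A : c ^+ 4 = 1 -> is_pauli A -> is_pauli (c *: A).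
Proof.
move=> c4 /is_pauliP[a [p [a4 ->]]]; apply/is_pauliP.
by exists (c * a), p; rewrite exprMn c4 a4 mulr1 scalerA.
Qed.

Lemma pauli_mul A B : is_pauli A -> is_pauli B -> is_pauli (A *m B).
Proof.
move=> /is_pauliP[a [p [a4 ->]]] /is_pauliP[b [q [b4 ->]]].
have [r [c [c4 pq]]] := pstr_mul p q.
rewrite -scalemxAl -scalemxAr pq !scalerA; apply: pauli_scale (pauli_pstr r).
by rewrite !exprMn a4 b4 c4 !mulr1.
Qed.

Lemma pauli_scomm A B : is_pauli A -> is_pauli B -> exists2 e, e ^+ 2 = 1 & scomm e A B.
Proof.
move=> /is_pauliP[a [p [_ ->]]] /is_pauliP[b [q [_ ->]]].
have [e e2 pq] := pstr_comm q p; exists e => //.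
by rewrite /scomm -!scalemxAl -!scalemxAr pq !scalerA [a * b]mulrC [_ * e]mulrC mulrA.
Qed.

Lemma pauli_sq A : is_pauli A -> exists2 k, k ^+ 2 = 1 & A *m A = k *: 1%:M.
Proof.
move=> /is_pauliP[a [p [a4 ->]]]; exists (a ^+ 2); first by rewrite -exprM.
by rewrite -scalemxAl -scalemxAr pstr_sq scalerA expr2.
Qed.

End PauliGroup.

Lemma pauli_tens t c s (R : 'M[algC]_(2 ^ t)) :
  c ^+ 4 = 1 -> is_pauli R -> is_pauli (c *: tens2 (sigm s) R).
Proof.
move=> c4 /is_pauliP[a [p [a4 ->]]]; rewrite tens2Zr -pstr_cons scalerA.
by apply: pauli_scale (pauli_pstr _); rewrite exprMn c4 a4 mulr1.
Qed.

Lemma pauli_tens_decomp t (P : 'M[algC]_(2 ^ t.+1)) : is_pauli P ->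
  exists c s (p : 'I_t -> 'I_4), c ^+ 4 = 1 /\ P = c *: tens2 (sigm s) (pstr p).
Proof.
move=> /is_pauliP[c [p [c4 ->]]].
by exists c, (p ord0), (fun j => p (lift ord0 j)); rewrite -pstr_head.
Qed.

(** * Operators controlled by the first qubit *)

Definition offdiag (s : 'I_4) : bool := (val s == 1)%N || (val s == 2)%N.

Lemma ketbra_mul (a b : 'I_2) : ketbra a *m ketbra b = (a == b)%:R *: ketbra a.
Proof.
apply/matrixP => x y; rewrite mulmx2E !mxE.
by case: a b x y => [[|[|//]] ?] [[|[|//]] ?] [[|[|//]] ?] [[|[|//]] ?];
  rewrite /= ?(mul0r, mul1r, mulr0, addr0, add0r).
Qed.

Lemma ketbra_sum : ketbra ord0 + ketbra ord_max = 1%:M :> 'M[algC]_2.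
Proof.
apply/matrixP => x y; rewrite !mxE.
by case: x y => [[|[|//]] ?] [[|[|//]] ?]; rewrite /= ?(addr0, add0r).
Qed.

Lemma ketbra_sigm s :
  ketbra ord0 *m sigm s = sigm s *m ketbra (if offdiag s then ord_max else ord0) /\
  ketbra ord_max *m sigm s = sigm s *m ketbra (if offdiag s then ord0 else ord_max).
Proof.
by split; apply/matrixP => x y; rewrite !mulmx2E !mxE;
  case: s x y => [[|[|[|[|//]]]] ?] [[|[|//]] ?] [[|[|//]] ?];
  rewrite /sig /offdiag /= ?(mul0r, mul1r, mulr0, mulr1, addr0, add0r).
Qed.

Section ControlledBlocks.
Variable t : nat.
Implicit Types (A B U Q R : 'M[algC]_(2 ^ t)).

Definition ctrl2 A B : 'M[algC]_(2 ^ t.+1) := tens2 (ketbra ord0) A + tens2 (ketbra ord_max) B.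

Lemma ctrlE U : ctrl U = ctrl2 1%:M U.
Proof. by []. Qed.

Lemma tens2_1l B : tens2 1%:M B = ctrl2 B B.
Proof. by rewrite -ketbra_sum tens2Dl. Qed.

Lemma ctrl2_mul A B A' B' : ctrl2 A B *m ctrl2 A' B' = ctrl2 (A *m A') (B *m B').
Proof.
rewrite /ctrl2 mulmxDl !mulmxDr !tens2_mul !ketbra_mul /= !scale1r !scale0r !tens2_0l.
by rewrite addr0 add0r.
Qed.

Lemma ctrl2_sigm s A B :
  ctrl2 A B *m tens2 (sigm s) 1%:M =
  tens2 (sigm s) 1%:M *m (if offdiag s then ctrl2 B A else ctrl2 A B).
Proof.
have [E0s E1s] := ketbra_sigm s.
rewrite /ctrl2 mulmxDl !tens2_mul E0s E1s !mulmx1.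
by case: (offdiag s); rewrite mulmxDr !tens2_mul !mul1mx // addrC.
Qed.

Lemma tens2_sigm_split s R : tens2 (sigm s) R = tens2 (sigm s) 1%:M *m ctrl2 R R.
Proof. by rewrite -tens2_1l tens2_mul mulmx1 mul1mx. Qed.

Lemma ctrl_tens2_diag s U Q R : ~~ offdiag s -> Q *m R *m U = U *m R ->
  ctrl U *m tens2 (sigm s) R = ctrl Q *m tens2 (sigm s) R *m ctrl U.
Proof.
move=> /negbTE diag_s QRU; rewrite !ctrlE tens2_sigm_split !mulmxA !ctrl2_sigm diag_s.
by rewrite -!mulmxA !ctrl2_mul !mul1mx mulmx1 mulmxA QRU.
Qed.

Lemma ctrl_tens2_offdiag s U Q R (R' : 'M[algC]_(2 ^ t)) : offdiag s ->
  U *m Q *m R' = U *m R -> U *m R' *m U = R ->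
  ctrl U *m tens2 (sigm s) R = tens2 1%:M U *m ctrl Q *m tens2 (sigm s) R' *m ctrl U.
Proof.
move=> off_s UQR' UR'U; rewrite !ctrlE tens2_1l (tens2_sigm_split s R) (tens2_sigm_split s R').
rewrite ctrl2_mul !mulmxA.
rewrite !ctrl2_sigm off_s -!mulmxA !ctrl2_mul !mul1mx !mulmx1.
by rewrite !mulmxA UQR' UR'U.
Qed.

End ControlledBlocks.

Lemma scomm_sign n e (A B : 'M[algC]_n) : e ^+ 2 = 1 -> scomm e A B ->
  A *m B = B *m A \/ A *m B = - (B *m A).
Proof.
move/eqP; rewrite sqrf_eq1 => /orP[] /eqP-> ->.
  by left; rewrite scale1r.
by right; rewrite scaleN1r.
Qed.

Lemma commutant_acts_trivially t (C Q : 'M[algC]_(2 ^ t)) (j : 'I_t) :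
  (forall W, is_pauli W -> W *m C = C *m W -> W *m Q = Q *m W) ->
  acts_trivially C j -> acts_trivially Q j.
Proof.
move=> QW /acts_triviallyP[CX CZ]; apply/acts_triviallyP.
by split; apply/esym/QW; rewrite ?CX ?CZ //; apply: pauli_pstr.
Qed.

(** * Pauli square roots *)

Section CliffordSquareRoot.
Variables (t : nat) (C R : 'M[algC]_(2 ^ t)).
Hypotheses (C_unitary : unitary C)
  (C_clifford : forall P, is_pauli P -> is_pauli (C *m P *m adjmx C))
  (C2_pauli : is_pauli (C *m C)) (R_pauli : is_pauli R) (R_sq : R *m R = 1%:M).

Local Notation C' := (adjmx C).
Local Notation K := (C *m C).
Local Notation R1 := (C *m R *m C').

Let CC' : C *m C' = 1%:M. Proof. by case: C_unitary. Qed.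
Let C'C : C' *m C = 1%:M. Proof. by case: C_unitary. Qed.
Let R1_pauli : is_pauli R1. Proof. exact: C_clifford. Qed.

Lemma conj_adj_sign : exists2 e, e ^+ 2 = 1 & C' *m R *m C = e *: R1.
Proof.
have [e e2 RK] := pauli_scomm R_pauli C2_pauli; exists e => //.
have -> : C' *m R *m C = C' *m (R *m K) *m C'.
  by rewrite !mulmxA -(mulmxA _ C C') CC' mulmx1.
by rewrite RK -scalemxAr -scalemxAl !mulmxA C'C mul1mx.
Qed.

Lemma adj_sq : exists2 k, k ^+ 2 = 1 & C' *m C' = k *: K.
Proof.
have [k k2 KK] := pauli_sq C2_pauli; exists k => //.
have C'C'K : C' *m C' *m K = 1%:M by rewrite mulmxA -(mulmxA C') C'C mulmx1 C'C.
rewrite -[C' *m C']mulmx1 (_ : 1%:M = k *: (K *m K)); last first.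
  by rewrite KK scalerA -expr2 k2 scale1r.
by rewrite -scalemxAr (mulmxA (C' *m C') K K) C'C'K mul1mx.
Qed.

Lemma conj_commutant W : is_pauli W -> W *m C = C *m W ->
  W *m (R1 *m R) = R1 *m R *m W /\ W *m (R *m C *m R *m C) = R *m C *m R *m C *m W.
Proof.
move=> W_pauli WC; have [f f2 RW] := pauli_scomm R_pauli W_pauli.
have CW : scomm 1 C W by rewrite /scomm WC scale1r.
have C'W : scomm 1 C' W.
  rewrite /scomm scale1r -[C' *m W]mulmx1 -CC' mulmxA -(mulmxA C' W C) WC.
  by rewrite !mulmxA C'C mul1mx.
split; apply/esym.
- have := scommM (scommM (scommM CW RW) C'W) RW.
  by rewrite /scomm mul1r mulr1 -expr2 f2 scale1r.
- have := scommM (scommM (scommM RW CW) RW) CW.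
  by rewrite /scomm !mulr1 -expr2 f2 scale1r.
Qed.

Lemma diag_ctrl_pauli : is_pauli (R1 *m R).
Proof. exact: pauli_mul. Qed.

Lemma diag_ctrl_scomm : exists2 e, e ^+ 2 = 1 & scomm e (R1 *m R) C.
Proof.
have [e e2 C'RC] := conj_adj_sign; have [f f2 RR1] := pauli_scomm R_pauli R1_pauli.
have RC : R *m C = e *: (C *m R1) by rewrite scalemxAr -C'RC !mulmxA CC' mul1mx.
have R1C : R1 *m C = C *m R by rewrite -mulmxA C'C mulmx1.
exists (e * f); first by rewrite exprMn e2 f2 mulr1.
by rewrite /scomm -mulmxA RC -scalemxAr (mulmxA R1) R1C -(mulmxA C) RR1 -scalemxAr scalerA.
Qed.

Lemma diag_ctrl_eq : R1 *m R *m R *m C = C *m R.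
Proof. by rewrite -(mulmxA _ R R) R_sq mulmx1 -mulmxA C'C mulmx1. Qed.

Lemma offdiag_ctrl_pauli : is_pauli (R *m C *m R *m C).
Proof.
have -> : R *m C *m R *m C = R *m R1 *m K by rewrite !mulmxA -(mulmxA _ C' C) C'C mulmx1.
by apply: pauli_mul => //; apply: pauli_mul.
Qed.

Lemma offdiag_target_pauli : is_pauli (C' *m R *m C').
Proof.
have [e e2 C'RC] := conj_adj_sign; have [k k2 C'C'] := adj_sq.
have -> : C' *m R *m C' = C' *m R *m C *m (C' *m C').
  by rewrite !mulmxA -(mulmxA _ C C') CC' mulmx1.
rewrite C'RC C'C' -scalemxAl -scalemxAr scalerA; apply: pauli_scale; last exact: pauli_mul.
by rewrite exprMn !(exprM _ 2 2) e2 k2 !expr1n mulr1.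
Qed.

Lemma offdiag_ctrl_scomm : exists2 e, e ^+ 2 = 1 & scomm e (R *m C *m R *m C) C.
Proof.
have [g g2 RK] := pauli_scomm R_pauli C2_pauli.
have [f f2 RR1] := pauli_scomm R_pauli R1_pauli.
have KR : K *m R = g *: (R *m K) by rewrite RK scalerA -expr2 g2 scale1r.
have R1R : R1 *m R = f *: (R *m R1) by rewrite RR1 scalerA -expr2 f2 scale1r.
exists (g * f); first by rewrite exprMn g2 f2 mulr1.
have CQ : C *m (R *m C *m R *m C) = R1 *m K *m R *m C.
  by rewrite !mulmxA -(mulmxA _ C' C) C'C mulmx1.
have QC : R *m C *m R *m C *m C = R *m R1 *m K *m C.
  by rewrite !mulmxA -(mulmxA _ C' C) C'C mulmx1.
rewrite /scomm CQ QC -(mulmxA R1 K R) KR -scalemxAr (mulmxA R1 R K) R1R.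
rewrite -!scalemxAl !scalerA.
by rewrite -mulrA -expr2 exprMn g2 f2 mulr1 scale1r.
Qed.

Lemma offdiag_ctrl_eq : C *m (R *m C *m R *m C) *m (C' *m R *m C') = C *m R.
Proof.
rewrite !mulmxA -(mulmxA _ C C') CC' mulmx1 -(mulmxA _ R R) R_sq mulmx1.
by rewrite -(mulmxA _ C C') CC' mulmx1.
Qed.

Lemma offdiag_target_eq : C *m (C' *m R *m C') *m C = R.
Proof. by rewrite !mulmxA CC' mul1mx -mulmxA C'C mulmx1. Qed.

End CliffordSquareRoot.

Theorem theorem1 (t : nat) (C : 'M[algC]_(2 ^ t)) (P : 'M[algC]_(2 ^ t.+1)) :
  PSC C -> is_pauli P ->
  exists (P' : 'M[algC]_(2 ^ t.+1)) (Q : 'M[algC]_(2 ^ t)) (b : bool),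
    [/\ is_pauli P', is_pauli Q,
        Q *m C = C *m Q \/ Q *m C = - (C *m Q),
        (forall j : 'I_t, in_supp Q j -> in_supp C j) &
        ctrl C *m P =
          tens2 1%:M (if b then C else 1%:M) *m ctrl Q *m P' *m ctrl C].
Proof.
move=> [[C_unitary C_clifford] [_ C2_pauli]] /pauli_tens_decomp[c [s [p [c4 ->]]]].
set R := pstr p; have R_pauli : is_pauli R := pauli_pstr p; have R_sq := pstr_sq p.
have supp Q : (forall W, is_pauli W -> W *m C = C *m W -> W *m Q = Q *m W) ->
    forall j, in_supp Q j -> in_supp C j.
  by move=> QW j QnT CT; apply/QnT/(commutant_acts_trivially QW).
have commutant := conj_commutant C_unitary R_pauli.
rewrite -scalemxAr; have [off|diag] := boolP (offdiag s).
- have [e e2 QC] := offdiag_ctrl_scomm C_unitary C_clifford C2_pauli R_pauli.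
  exists (c *: tens2 (sigm s) (adjmx C *m R *m adjmx C)), (R *m C *m R *m C), true; split.
  + exact/pauli_tens/(offdiag_target_pauli C_unitary C_clifford C2_pauli R_pauli).
  + exact: (offdiag_ctrl_pauli C_unitary C_clifford C2_pauli R_pauli).
  + exact: scomm_sign QC.
  + by apply: supp => W W_pauli WC; case: (commutant W W_pauli WC).
  + rewrite -scalemxAr -scalemxAl (ctrl_tens2_offdiag off (offdiag_ctrl_eq C_unitary R_sq)) //.
    exact: offdiag_target_eq.
- have [e e2 QC] := diag_ctrl_scomm C_unitary C_clifford C2_pauli R_pauli.
  exists (c *: tens2 (sigm s) R), (C *m R *m adjmx C *m R), false; split.
  + exact: pauli_tens.
  + exact: diag_ctrl_pauli.
  + exact: scomm_sign QC.
  + by apply: supp => W W_pauli WC; case: (commutant W W_pauli WC).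
  + rewrite tens2_1 mul1mx -scalemxAr -scalemxAl.
    by rewrite (ctrl_tens2_diag diag (diag_ctrl_eq C_unitary R_sq)).
Qed.
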